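(* Let $\Sigma$ be an alphabet. The functor $G=U\circ\Theta:\mathbf{TTS}_{\Sigma}\to\mathbf{Tr}_{\Sigma\times\mathbb{R}_{>0}}$ is a coreflection.
   Context: For a set $C$, a guard is a subset of $\mathbb{R}_{\ge0}^C$ of the form $\prod_{c\in C}I_c$ with each $I_c$ a non-empty interval of $\mathbb{R}_{\ge0}$; $G_C$ denotes the set of guards. A timed transition system is $(S,i,C,\Delta)$ with $S$ a set of states, $i\in S$, $C$ a set of clocks, and $\Delta\subseteq S\times\Sigma\times 2^C\times G_C\times S$ (the $2^C$ component being the set of clocks reset). A morphism $(S,i,C,\Delta)\to(S',i',C',\Delta')$ is a pair $(f,g)$ with $f:S\to S'$, $f(i)=i'$, and $g:C'\to C$, such that for every $(s,a,R,\prod_{c\in C}I_c,s')\in\Delta$ there is $(f(s),a,R',\prod_{c'\in C'}I'_{c'},f(s'))\in\Delta'$ with $R'=g^{-1}(R)$ and $I_{g(c')}\subseteq I'_{c'}$ for all $c'\in C'$. Composition is $(f_2,g_2)\circ(f_1,g_1)=(f_2\circ f_1,g_1\circ g_2)$. This is the category $\mathbf{TTS}_{\Sigma}$. For an alphabet $A$, $\mathbf{TS}_{A}$ is the category of transition systems $(S,i,\Delta)$, $\Delta\subseteq S\times A\times S$, with morphisms the functions on states preserving the initial state and transitions; a run is a sequence $i=q_0\xrightarrow{a_1}\cdots\xrightarrow{a_n}q_n$ of transitions; $\mathbf{Tr}_{A}$ is the full subcategory of synchronization trees (every state is the end of exactly one run). The functor $\Theta:\mathbf{TTS}_{\Sigma}\to\mathbf{TS}_{\Sigma\times\mathbb{R}_{>0}}$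 sends $(S,i,C,\Delta)$ to $(S\times\mathbb{R}_{\ge0}^C,(i,\tilde0),\Gamma)$, where $\tilde0$ is the zero valuation and $((s,\nu),(a,t),(s',\nu'))\in\Gamma$ iff there is $(s,a,R,\prod_c I_c,s')\in\Delta$ with $\nu(c)+t\in I_c$ for all $c\in C$ and $\nu'(c)=0$ for $c\in R$, $\nu'(c)=\nu(c)+t$ for $c\notin R$; on morphisms $\Theta(f,g)(s,\nu)=(f(s),\nu\circ g)$. The unfolding functor $U:\mathbf{TS}_{A}\to\mathbf{Tr}_{A}$ sends a transition system to the synchronization tree whose states are its runs, with initial state the one-element run and transitions $(\pi,a,\pi\xrightarrow{a}q)$ extending runs by one transition; on morphisms it applies the morphism pointwise to runs. A functor is a coreflection if it is a right adjoint whose left adjoint is fully faithful (equivalently, a right adjoint with unit a natural isomorphism). *)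

From Stdlib Require Import Reals List ProofIrrelevance.
Open Scope R_scope.

Record TS (A : Type) := mkTS {
  ts_st : Type;
  ts_init : ts_st;
  ts_tr : ts_st -> A -> ts_st -> Prop }.
Arguments ts_st {A}.
Arguments ts_init {A}.
Arguments ts_tr {A}.

Definition is_ts_mor {A : Type} (X Y : TS A) (h : ts_st X -> ts_st Y) : Prop :=
  h (ts_init X) = ts_init Y /\
  (forall s a s', ts_tr X s a s' -> ts_tr Y (h s) a (h s')).

Definition is_ts_iso {A : Type} (X Y : TS A) (h : ts_st X -> ts_st Y) : Prop :=
  is_ts_mor X Y h /\
  exists k : ts_st Y -> ts_st X,
    is_ts_mor Y X k /\ (forall x, k (h x) = x) /\ (forall y, h (k y) = y).

(* A run i = q0 -a1-> q1 ... -an-> qn is encoded as the list [(a1,q1);...;(an,qn)]. *)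
Fixpoint run_from {A : Type} (X : TS A) (q : ts_st X) (l : list (A * ts_st X)) : Prop :=
  match l with
  | nil => True
  | (a, q') :: l' => ts_tr X q a q' /\ run_from X q' l'
  end.

Definition is_run {A : Type} (X : TS A) (l : list (A * ts_st X)) : Prop :=
  run_from X (ts_init X) l.

Definition run_end {A : Type} (X : TS A) (l : list (A * ts_st X)) : ts_st X :=
  last (map snd l) (ts_init X).

Definition is_tree {A : Type} (X : TS A) : Prop :=
  forall s : ts_st X, exists! l, is_run X l /\ run_end X l = s.

Definition Run {A : Type} (X : TS A) : Type := { l : list (A * ts_st X) | is_run X l }.

Definition run_nil {A : Type} (X : TS A) : Run X := exist _ nil I.

Definition U {A : Type} (X : TS A) : TS A :=
  {| ts_st := Run X;
     ts_init := run_nil X;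
     ts_tr := fun p a p' =>
       exists q, proj1_sig p' = proj1_sig p ++ (a, q) :: nil |}.

Definition run_map {A : Type} (X Y : TS A) (h : ts_st X -> ts_st Y)
  (l : list (A * ts_st X)) : list (A * ts_st Y) :=
  map (fun aq => (fst aq, h (snd aq))) l.

Lemma run_from_map {A : Type} (X Y : TS A) (h : ts_st X -> ts_st Y) :
  (forall s a s', ts_tr X s a s' -> ts_tr Y (h s) a (h s')) ->
  forall l q, run_from X q l -> run_from Y (h q) (run_map X Y h l).
Proof.
  intros Hh l; induction l as [|[a q'] l IH]; intros q H; simpl in *; auto.
  destruct H as [H1 H2]; split; auto.
Qed.

Lemma run_map_ok {A : Type} (X Y : TS A) (h : ts_st X -> ts_st Y) :
  is_ts_mor X Y h -> forall l, is_run X l -> is_run Y (run_map X Y h l).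
Proof.
  intros [H0 Hh] l Hl; unfold is_run; rewrite <- H0; now apply (run_from_map X Y h).
Qed.

Definition U_mor {A : Type} (X Y : TS A) (h : ts_st X -> ts_st Y)
  (Hh : is_ts_mor X Y h) : Run X -> Run Y :=
  fun p => exist _ (run_map X Y h (proj1_sig p)) (run_map_ok X Y h Hh _ (proj2_sig p)).

Definition is_interval (I : R -> Prop) : Prop :=
  (exists x, I x) /\ (forall x, I x -> 0 <= x) /\
  (forall x y z, I x -> I z -> x <= y -> y <= z -> I y).

(* a guard prod_{c in C} I_c, given by its family of non-empty intervals *)
Definition is_guard {C : Type} (I : C -> R -> Prop) : Prop :=
  forall c, is_interval (I c).

(* (S, i, C, Delta); a transition (s, a, Rs, I, s') has reset set Rs ⊆ C
   (a predicate on C) and guard I *)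
Record TTS (Sigma : Type) := mkTTS {
  tts_st : Type;
  tts_init : tts_st;
  tts_clk : Type;
  tts_tr : tts_st -> Sigma -> (tts_clk -> Prop) -> (tts_clk -> R -> Prop) -> tts_st -> Prop;
  tts_tr_guard : forall s a Rs I s', tts_tr s a Rs I s' -> is_guard I }.
Arguments tts_st {Sigma}.
Arguments tts_init {Sigma}.
Arguments tts_clk {Sigma}.
Arguments tts_tr {Sigma}.
Arguments tts_tr_guard {Sigma}.

Definition is_tts_mor {Sigma : Type} (X Y : TTS Sigma)
  (f : tts_st X -> tts_st Y) (g : tts_clk Y -> tts_clk X) : Prop :=
  f (tts_init X) = tts_init Y /\
  forall s a Rs I s', tts_tr X s a Rs I s' ->
    exists Rs' I', tts_tr Y (f s) a Rs' I' (f s') /\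
      (forall c', Rs' c' <-> Rs (g c')) /\
      (forall c' x, I (g c') x -> I' c' x).

Definition posR : Type := { t : R | 0 < t }.

Definition Val (C : Type) : Type := { nu : C -> R | forall c, 0 <= nu c }.

Lemma zero_val_ok {C : Type} : forall c : C, 0 <= (fun _ : C => 0) c.
Proof. intros; apply Rle_refl. Qed.

Definition zero_val (C : Type) : Val C := exist (fun nu' : C -> R => forall c, 0 <= nu' c) (fun _ => 0) (@zero_val_ok C).

Definition Theta_tr {Sigma : Type} (X : TTS Sigma)
  (p : tts_st X * Val (tts_clk X)) (l : Sigma * posR)
  (p' : tts_st X * Val (tts_clk X)) : Prop :=
  let t := proj1_sig (snd l) in
  exists Rs I, tts_tr X (fst p) (fst l) Rs I (fst p') /\
    (forall c, I c (proj1_sig (snd p) c + t)) /\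
    (forall c, Rs c -> proj1_sig (snd p') c = 0) /\
    (forall c, ~ Rs c -> proj1_sig (snd p') c = proj1_sig (snd p) c + t).

Definition Theta {Sigma : Type} (X : TTS Sigma) : TS (Sigma * posR) :=
  {| ts_st := tts_st X * Val (tts_clk X);
     ts_init := (tts_init X, zero_val (tts_clk X));
     ts_tr := Theta_tr X |}.

Definition comp_val (C C' : Type) (g : C' -> C) (nu : Val C) : Val C' :=
  exist (fun nu' : C' -> R => forall c, 0 <= nu' c) (fun c' => proj1_sig nu (g c')) (fun c' => proj2_sig nu (g c')).

Definition Theta_map {Sigma : Type} (X Y : TTS Sigma)
  (f : tts_st X -> tts_st Y) (g : tts_clk Y -> tts_clk X) :
  ts_st (Theta X) -> ts_st (Theta Y) :=
  fun p => (f (fst p), comp_val (tts_clk X) (tts_clk Y) g (snd p)).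

Lemma Theta_mor_ok {Sigma : Type} (X Y : TTS Sigma)
  (f : tts_st X -> tts_st Y) (g : tts_clk Y -> tts_clk X) :
  is_tts_mor X Y f g -> is_ts_mor (Theta X) (Theta Y) (Theta_map X Y f g).
Proof.
  intros [H0 Hf]; split.
  - simpl; unfold Theta_map; simpl; rewrite H0; f_equal.
    unfold comp_val, zero_val; simpl.
    apply eq_exist_uncurried; exists eq_refl; apply proof_irrelevance.
  - intros [s nu] [a t] [s' nu'] [Rs [I [HD [HI [HR HN]]]]]; simpl in *.
    destruct (Hf _ _ _ _ _ HD) as [Rs' [I' [HD' [HRs HI']]]].
    exists Rs', I'; simpl.
    split; [exact HD' | split; [| split]].
    + intros c'; apply HI'; apply HI.
    + intros c' Hc'; apply HR; apply HRs; auto.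
    + intros c' Hc'; apply HN; intro H; apply Hc'; apply HRs; auto.
Qed.

Definition G {Sigma : Type} (X : TTS Sigma) : TS (Sigma * posR) := U (Theta X).

Definition G_mor {Sigma : Type} (X Y : TTS Sigma)
  (f : tts_st X -> tts_st Y) (g : tts_clk Y -> tts_clk X)
  (H : is_tts_mor X Y f g) : ts_st (G X) -> ts_st (G Y) :=
  U_mor (Theta X) (Theta Y) (Theta_map X Y f g) (Theta_mor_ok X Y f g H).

(* G is a coreflection: G lands in Tr, and for every synchronization tree T
   there is a universal arrow eta_T : T -> G(F T) (so G is a right adjoint,
   with unit eta), and every eta_T is an isomorphism (unit is a natural iso). *)
Definition is_coreflection_G (Sigma : Type) : Prop :=
  (forall X : TTS Sigma, is_tree (G X)) /\
  (forall T : TS (Sigma * posR), is_tree T ->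
    exists (F : TTS Sigma) (eta : ts_st T -> ts_st (G F)),
      is_ts_mor T (G F) eta /\
      is_ts_iso T (G F) eta /\
      forall (X : TTS Sigma) (h : ts_st T -> ts_st (G X)),
        is_ts_mor T (G X) h ->
        exists (f : tts_st F -> tts_st X) (g : tts_clk X -> tts_clk F)
               (H : is_tts_mor F X f g),
          (forall x, G_mor F X f g H (eta x) = h x) /\
          (forall (f' : tts_st F -> tts_st X) (g' : tts_clk X -> tts_clk F)
                  (H' : is_tts_mor F X f' g'),
             (forall x, G_mor F X f' g' H' (eta x) = h x) ->
             (forall s, f' s = f s) /\ (forall c, g' c = g c))).

(* The left adjoint F sends a synchronization tree T to the timed system with
   the same states and transitions, whose clocks are the sets of non-initial
   states (a clock is reset on entering one of its states), and whose
   transitions are guarded by the single value each clock has along the unique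
   run of T reaching the source.  Along every run of F T the valuation is thus
   forced, so the unit T -> G (F T) is an isomorphism.  A morphism
   h : T -> G X transposes to F T -> X by reading off the state reached by h
   and by sending a clock c of X to the set of states at which h resets c.
   Since delays are positive, c is reset exactly when it reads 0; this makes
   the transpose a morphism, and the only one factoring h through the unit. *)

From Stdlib Require Import Reals List Lra Classical ClassicalEpsilon
  FunctionalExtensionality PropExtensionality ProofIrrelevance.
Import ListNotations.
Open Scope R_scope.

Lemma sig_eq {B : Type} {P : B -> Prop} (u v : sig P) :
  proj1_sig u = proj1_sig v -> u = v.
Proof. apply eq_sig_hprop; intros; apply proof_irrelevance. Qed.

Lemma val_eq {C : Type} (nu1 nu2 : Val C) :
  (forall c, proj1_sig nu1 c = proj1_sig nu2 c) -> nu1 = nu2.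
Proof. intros E; apply sig_eq, functional_extensionality, E. Qed.

Lemma last_cons {B : Type} (x : B) (m : list B) (d : B) : last (x :: m) d = last m x.
Proof.
  revert x d; induction m as [|y m IH]; intros x d; [reflexivity|].
  change (last (y :: m) d = last (y :: m) x); rewrite !IH; reflexivity.
Qed.

Section Runs.
Context {A : Type} (X : TS A).

Lemma run_from_snoc q l a s :
  run_from X q (l ++ [(a, s)]) <-> run_from X q l /\ ts_tr X (last (map snd l) q) a s.
Proof.
  revert q; induction l as [|[b r] l IH]; intros q; cbn -[last].
  - tauto.
  - rewrite IH, last_cons; tauto.
Qed.

Lemma is_run_snoc l a s :
  is_run X (l ++ [(a, s)]) <-> is_run X l /\ ts_tr X (run_end X l) a s.
Proof. apply run_from_snoc. Qed.

Lemma run_end_snoc l a s : run_end X (l ++ [(a, s)]) = s.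
Proof. unfold run_end; rewrite map_app; apply last_last. Qed.

Lemma run_end_map (Y : TS A) (h : ts_st X -> ts_st Y) l :
  is_ts_mor X Y h -> run_end Y (run_map X Y h l) = h (run_end X l).
Proof.
  intros [Hinit _]; unfold run_end, run_map; rewrite <- Hinit.
  generalize (ts_init X); induction l as [|x l IH]; intros d; [reflexivity|].
  cbn [map]; rewrite !last_cons; apply IH.
Qed.

End Runs.

Section Unfolding.
Context {A : Type} (X : TS A).

Lemma U_run_to ls (r : is_run X ls) :
  exists l, is_run (U X) l /\ run_end (U X) l = exist _ ls r.
Proof.
  revert r; induction ls as [|[a q] ls IH] using rev_ind; intros r.
  - exists []; split; [exact I | now apply sig_eq].
  - destruct (proj1 (is_run_snoc X ls a q) r) as [r0 _].
    destruct (IH r0) as [l [Hl Hend]].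
    exists (l ++ [(a, exist _ (ls ++ [(a, q)]) r)]).
    rewrite is_run_snoc, run_end_snoc, Hend.
    split; [split; [exact Hl | now exists q] | reflexivity].
Qed.

Lemma U_run_end_nil l : is_run (U X) l -> proj1_sig (run_end (U X) l) = [] -> l = [].
Proof.
  destruct l as [|[a p] l _] using rev_ind; [reflexivity|].
  rewrite is_run_snoc, run_end_snoc; intros [_ [q Hq]] Hnil.
  rewrite Hnil in Hq; destruct (app_cons_not_nil _ _ _ Hq).
Qed.

Lemma U_run_end_inj l l' :
  is_run (U X) l -> is_run (U X) l' -> run_end (U X) l = run_end (U X) l' -> l = l'.
Proof.
  revert l'; induction l as [|[a p] l IH] using rev_ind; intros l' Hl Hl' Hend.
  - symmetry; apply U_run_end_nil; [exact Hl' | now rewrite <- Hend].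
  - destruct l' as [|[a' p'] l' _] using rev_ind.
    + apply U_run_end_nil; [exact Hl | now rewrite Hend].
    + rewrite !run_end_snoc in Hend; subst p'.
      apply is_run_snoc in Hl as [Hl [q Hq]], Hl' as [Hl' [q' Hq']].
      rewrite Hq in Hq'; apply app_inj_tail in Hq' as [Hend' Ha].
      injection Ha as -> _.
      f_equal; apply IH; [exact Hl | exact Hl' | now apply sig_eq].
Qed.

Lemma U_is_tree : is_tree (U X).
Proof.
  intros [ls r]; destruct (U_run_to ls r) as [l [Hl Hend]].
  exists l; split; [now split|].
  intros l' [Hl' Hend']; apply U_run_end_inj; [exact Hl | exact Hl' | now rewrite Hend, Hend'].
Qed.

End Unfolding.

Section Trees.
Context {A : Type} (T : TS A) (Ht : is_tree T).

Definition tree_run (s : ts_st T) : list (A * ts_st T) :=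
  proj1_sig (constructive_definite_description _ (Ht s)).

Lemma tree_run_spec s : is_run T (tree_run s) /\ run_end T (tree_run s) = s.
Proof. exact (proj2_sig (constructive_definite_description _ (Ht s))). Qed.

Lemma tree_run_end l : is_run T l -> tree_run (run_end T l) = l.
Proof.
  intros Hl; destruct (Ht (run_end T l)) as [l0 [_ Huniq]].
  transitivity l0.
  - symmetry; apply Huniq, tree_run_spec.
  - apply Huniq; split; [exact Hl | reflexivity].
Qed.

Lemma tree_run_init : tree_run (ts_init T) = [].
Proof. exact (tree_run_end [] I). Qed.

Lemma tree_run_tr u a v : ts_tr T u a v -> tree_run v = tree_run u ++ [(a, v)].
Proof.
  intros Htr; destruct (tree_run_spec u) as [Hu Hend].
  rewrite <- (tree_run_end (tree_run u ++ [(a, v)])), run_end_snoc; [reflexivity|].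
  apply is_run_snoc; rewrite Hend; split; assumption.
Qed.

Lemma tree_tr_not_init u a v : ts_tr T u a v -> v <> ts_init T.
Proof.
  intros Htr ->; pose proof (tree_run_tr _ _ _ Htr) as E.
  rewrite tree_run_init in E; exact (app_cons_not_nil _ _ _ E).
Qed.

Lemma tree_tr_into v : v <> ts_init T -> exists u a, ts_tr T u a v.
Proof.
  intros Hv; destruct (Ht v) as [l [[Hrun Hend] _]].
  destruct l as [|[a w] l _] using rev_ind.
  - contradiction Hv; now rewrite <- Hend.
  - rewrite run_end_snoc in Hend; subst w.
    apply is_run_snoc in Hrun as [_ Htr]; eauto.
Qed.

End Trees.

Section Elapsed.
Context {Sigma St : Type} (P : St -> Prop).

Definition elapsed_step (v : R) (x : (Sigma * posR) * St) : R :=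
  if excluded_middle_informative (P (snd x)) then 0 else v + proj1_sig (snd (fst x)).

Definition elapsed (l : list ((Sigma * posR) * St)) : R := fold_left elapsed_step l 0.

Lemma elapsed_snoc l x : elapsed (l ++ [x]) = elapsed_step (elapsed l) x.
Proof. unfold elapsed; rewrite fold_left_app; reflexivity. Qed.

Lemma elapsed_nonneg l : 0 <= elapsed l.
Proof.
  induction l as [|x l IH] using rev_ind; [apply Rle_refl|].
  rewrite elapsed_snoc; unfold elapsed_step.
  destruct excluded_middle_informative; [lra|].
  destruct (snd (fst x)) as [t tpos]; simpl; lra.
Qed.

End Elapsed.

Section TreeTTS.
Context {Sigma : Type} (T : TS (Sigma * posR)) (Ht : is_tree T).

(* A clock is the set of states on entering which it is reset.  No transition
   enters the initial state, so it is excluded: membership of it could not be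
   observed, and the transpose of a morphism would not be unique. *)
Definition tree_clk : Type := { P : ts_st T -> Prop | ~ P (ts_init T) }.

Lemma tree_clk_eq (P Q : tree_clk) : (forall v, proj1_sig P v <-> proj1_sig Q v) -> P = Q.
Proof.
  intros E; apply sig_eq, functional_extensionality; intros v.
  apply propositional_extensionality, E.
Qed.

Definition tree_val (u : ts_st T) : Val tree_clk :=
  exist (fun nu => forall P, 0 <= nu P)
    (fun P : tree_clk => elapsed (proj1_sig P) (tree_run T Ht u))
    (fun P => elapsed_nonneg (proj1_sig P) (tree_run T Ht u)).

Definition tree_tts_tr u a (Rs : tree_clk -> Prop) (I : tree_clk -> R -> Prop) v : Prop :=
  exists t : posR, ts_tr T u (a, t) v /\
    (forall P, Rs P <-> proj1_sig P v) /\
    (forall P x, I P x <-> x = proj1_sig (tree_val u) P + proj1_sig t).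

Lemma tree_tts_tr_guard u a Rs I v : tree_tts_tr u a Rs I v -> is_guard I.
Proof.
  intros [[t tpos] [_ [_ HI]]] P; cbn [proj1_sig] in HI.
  pose proof (proj2_sig (tree_val u) P) as Hval.
  split; [|split].
  - exists (proj1_sig (tree_val u) P + t); apply HI; reflexivity.
  - intros x Hx; apply HI in Hx; lra.
  - intros x y z Hx Hz Hxy Hyz; apply HI in Hx, Hz; apply HI; lra.
Qed.

Definition tree_tts : TTS Sigma :=
  mkTTS Sigma (ts_st T) (ts_init T) tree_clk tree_tts_tr tree_tts_tr_guard.

Lemma tree_val_init : tree_val (ts_init T) = zero_val tree_clk.
Proof. apply val_eq; intros P; cbn [tree_val proj1_sig]; rewrite tree_run_init; reflexivity. Qed.

Lemma tree_val_tr u a t v P : ts_tr T u (a, t) v ->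
  proj1_sig (tree_val v) P =
  if excluded_middle_informative (proj1_sig P v) then 0
  else proj1_sig (tree_val u) P + proj1_sig t.
Proof.
  intros Htr; cbn [tree_val proj1_sig].
  rewrite (tree_run_tr T Ht _ _ _ Htr), elapsed_snoc; reflexivity.
Qed.

Lemma tree_val_eq0 v P : v <> ts_init T -> proj1_sig P v <-> proj1_sig (tree_val v) P = 0.
Proof.
  intros Hv; destruct (tree_tr_into T Ht v Hv) as [u [[a [t tpos]] Htr]].
  rewrite (tree_val_tr _ _ _ _ P Htr); cbn [proj1_sig].
  pose proof (proj2_sig (tree_val u) P) as Hval.
  destruct excluded_middle_informative as [Hp | Hp]; split; intros H.
  - reflexivity.
  - exact Hp.
  - contradiction.
  - exfalso; lra.
Qed.

Lemma Theta_tree_tts_tr u l v nu :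
  Theta_tr tree_tts (u, tree_val u) l (v, nu) <-> ts_tr T u l v /\ nu = tree_val v.
Proof.
  destruct l as [a t]; unfold Theta_tr; cbn [tree_tts tts_clk tts_tr fst snd]; split.
  - intros [Rs [I [[t0 [Htr [HRs HI]]] [Hguard [Hreset Htick]]]]].
    set (never := exist _ (fun _ => False) (fun H => H) : tree_clk).
    assert (Ht0 : t = t0).
    { apply sig_eq; apply (Rplus_eq_reg_l (proj1_sig (tree_val u) never)).
      apply HI, Hguard. }
    subst t0; split; [exact Htr|].
    apply val_eq; intros P; rewrite (tree_val_tr _ _ _ _ P Htr).
    destruct excluded_middle_informative as [Hp | Hp].
    + apply Hreset, HRs, Hp.
    + apply Htick; rewrite HRs; exact Hp.
  - intros [Htr ->].
    exists (fun P => proj1_sig P v), (fun P x => x = proj1_sig (tree_val u) P + proj1_sig t).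
    split; [|split; [|split]].
    + exists t; split; [exact Htr | split; intros; reflexivity].
    + intros P; reflexivity.
    + intros P Hp; rewrite (tree_val_tr _ _ _ _ P Htr).
      destruct excluded_middle_informative; [reflexivity | contradiction].
    + intros P Hp; rewrite (tree_val_tr _ _ _ _ P Htr).
      destruct excluded_middle_informative; [contradiction | reflexivity].
Qed.

Definition lift_run (l : list ((Sigma * posR) * ts_st T)) :
  list ((Sigma * posR) * ts_st (Theta tree_tts)) :=
  map (fun x => (fst x, (snd x, tree_val (snd x)))) l.

Lemma lift_run_end l :
  run_end (Theta tree_tts) (lift_run l) = (run_end T l, tree_val (run_end T l)).
Proof.
  destruct l as [|[a v] l _] using rev_ind.
  - cbn [lift_run map run_end last]; rewrite tree_val_init; reflexivity.
  - unfold lift_run; rewrite map_app; cbn [map fst snd]; rewrite !run_end_snoc; reflexivity.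
Qed.

Lemma lift_run_is_run l : is_run T l -> is_run (Theta tree_tts) (lift_run l).
Proof.
  induction l as [|[a v] l IH] using rev_ind; intros Hl; [exact I|].
  apply is_run_snoc in Hl as [Hl Htr].
  unfold lift_run; rewrite map_app; cbn [map fst snd]; apply is_run_snoc; fold (lift_run l).
  rewrite lift_run_end; split; [exact (IH Hl)|].
  apply Theta_tree_tts_tr; split; [exact Htr | reflexivity].
Qed.

Lemma Theta_tree_tts_run p :
  is_run (Theta tree_tts) p -> exists l, is_run T l /\ p = lift_run l.
Proof.
  induction p as [|[a [v nu]] p IH] using rev_ind; intros Hp; [now exists []|].
  apply is_run_snoc in Hp as [Hp Hstep]; destruct (IH Hp) as [l [Hl ->]].
  rewrite lift_run_end in Hstep; apply Theta_tree_tts_tr in Hstep as [Htr ->].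
  exists (l ++ [(a, v)]); split.
  - apply is_run_snoc; split; assumption.
  - unfold lift_run; rewrite map_app; reflexivity.
Qed.

Definition tree_unit (s : ts_st T) : ts_st (G tree_tts) :=
  exist _ (lift_run (tree_run T Ht s)) (lift_run_is_run _ (proj1 (tree_run_spec T Ht s))).

Lemma tree_unit_is_mor : is_ts_mor T (G tree_tts) tree_unit.
Proof.
  split.
  - apply sig_eq; cbn [tree_unit proj1_sig]; rewrite tree_run_init; reflexivity.
  - intros u l v Htr; exists (v, tree_val v); cbn [tree_unit proj1_sig].
    rewrite (tree_run_tr T Ht _ _ _ Htr); unfold lift_run; rewrite map_app; reflexivity.
Qed.

Lemma tree_unit_is_iso : is_ts_iso T (G tree_tts) tree_unit.
Proof.
  split; [exact tree_unit_is_mor|].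
  exists (fun p => fst (run_end (Theta tree_tts) (proj1_sig p))).
  split; [split|split].
  - reflexivity.
  - intros [p Hp] a [p' Hp'] [[v nu] Hq]; cbn [proj1_sig] in Hq |- *; subst p'.
    apply is_run_snoc in Hp' as [_ Hstep].
    destruct (Theta_tree_tts_run p Hp) as [l [Hl ->]].
    rewrite lift_run_end in Hstep; apply Theta_tree_tts_tr in Hstep as [Htr _].
    rewrite run_end_snoc, lift_run_end; exact Htr.
  - intros s; cbn [tree_unit proj1_sig]; rewrite lift_run_end; apply tree_run_spec.
  - intros [p Hp]; apply sig_eq; cbn [tree_unit proj1_sig].
    destruct (Theta_tree_tts_run p Hp) as [l [Hl ->]].
    rewrite lift_run_end; cbn [fst]; rewrite tree_run_end by exact Hl; reflexivity.
Qed.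

Section Transpose.
Context (X : TTS Sigma) (h : ts_st T -> ts_st (G X)) (Hh : is_ts_mor T (G X) h).

Definition reached_conf (s : ts_st T) : ts_st (Theta X) := run_end (Theta X) (proj1_sig (h s)).

Definition transpose_st (s : ts_st T) : tts_st X := fst (reached_conf s).

Definition transpose_clk (c : tts_clk X) : tree_clk :=
  exist (fun P => ~ P (ts_init T))
    (fun v => v <> ts_init T /\ proj1_sig (snd (reached_conf v)) c = 0)
    (fun Hinit => proj1 Hinit eq_refl).

Lemma mor_run_init : proj1_sig (h (ts_init T)) = [].
Proof. destruct Hh as [Hinit _]; rewrite Hinit; reflexivity. Qed.

Lemma mor_run_tr u l v : ts_tr T u l v ->
  proj1_sig (h v) = proj1_sig (h u) ++ [(l, reached_conf v)] /\
  Theta_tr X (reached_conf u) l (reached_conf v).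
Proof.
  intros Htr; destruct Hh as [_ Hmor]; destruct (Hmor _ _ _ Htr) as [q Hq].
  assert (Hconf : reached_conf v = q) by (unfold reached_conf; rewrite Hq; apply run_end_snoc).
  assert (Hrun : is_run (Theta X) (proj1_sig (h v))) by exact (proj2_sig (h v)).
  rewrite Hq in Hrun; apply is_run_snoc in Hrun as [_ Hstep].
  rewrite Hconf; split; [exact Hq | exact Hstep].
Qed.

Lemma elapsed_transpose_clk l c : is_run T l ->
  elapsed (proj1_sig (transpose_clk c)) l = proj1_sig (snd (reached_conf (run_end T l))) c.
Proof.
  induction l as [|[a v] l IH] using rev_ind; intros Hl.
  - change (0 = proj1_sig (snd (reached_conf (ts_init T))) c).
    unfold reached_conf; rewrite mor_run_init; reflexivity.
  - apply is_run_snoc in Hl as [Hl Htr].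
    destruct (mor_run_tr _ _ _ Htr) as [_ [Rs [I [_ [_ [Hreset Htick]]]]]].
    rewrite elapsed_snoc, run_end_snoc; unfold elapsed_step; cbn [fst snd].
    destruct excluded_middle_informative as [[_ H0] | Hnot]; [symmetry; exact H0|].
    rewrite IH by exact Hl; destruct (classic (Rs c)) as [Hr | Hr].
    + contradiction Hnot; split; [exact (tree_tr_not_init T Ht _ _ _ Htr) | exact (Hreset c Hr)].
    + symmetry; exact (Htick c Hr).
Qed.

Lemma tree_val_transpose_clk v c :
  proj1_sig (tree_val v) (transpose_clk c) = proj1_sig (snd (reached_conf v)) c.
Proof.
  destruct (tree_run_spec T Ht v) as [Hrun Hend]; cbn [tree_val proj1_sig].
  rewrite elapsed_transpose_clk, Hend by exact Hrun; reflexivity.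
Qed.

Lemma reached_conf_lift v :
  reached_conf v = Theta_map tree_tts X transpose_st transpose_clk (v, tree_val v).
Proof.
  rewrite (surjective_pairing (reached_conf v)) at 1; unfold Theta_map; cbn [fst snd]; f_equal.
  apply val_eq; intros c; cbn [comp_val proj1_sig snd].
  symmetry; apply tree_val_transpose_clk.
Qed.

Lemma transpose_is_mor : is_tts_mor tree_tts X transpose_st transpose_clk.
Proof.
  split.
  - change (fst (reached_conf (ts_init T)) = tts_init X); unfold reached_conf; rewrite mor_run_init; reflexivity.
  - intros u a Rs I v [t [Htr [HRs HI]]].
    destruct (mor_run_tr _ _ _ Htr) as [_ [Rs' [I' [HX [Hguard [Hreset Htick]]]]]].
    exists Rs', I'; split; [exact HX | split].
    + intros c; rewrite HRs; cbn [transpose_clk proj1_sig]; split.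
      * intros Hr; split; [exact (tree_tr_not_init T Ht _ _ _ Htr) | exact (Hreset c Hr)].
      * intros [_ H0]; apply NNPP; intros Hr; rewrite (Htick c Hr) in H0.
        pose proof (proj2_sig (snd (reached_conf u)) c) as Hval.
        destruct t as [t tpos]; cbn [proj1_sig snd] in H0; lra.
    + intros c x Hx; apply HI in Hx; rewrite tree_val_transpose_clk in Hx.
      subst x; apply Hguard.
Qed.

Lemma mor_run_lift l : is_run T l ->
  proj1_sig (h (run_end T l)) =
  run_map (Theta tree_tts) (Theta X) (Theta_map tree_tts X transpose_st transpose_clk)
    (lift_run l).
Proof.
  induction l as [|[a v] l IH] using rev_ind; intros Hl; [exact mor_run_init|].
  apply is_run_snoc in Hl as [Hl Htr]; rewrite run_end_snoc.
  rewrite (proj1 (mor_run_tr _ _ _ Htr)), IH by exact Hl.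
  unfold lift_run, run_map; rewrite !map_app; cbn [map fst snd].
  rewrite reached_conf_lift; reflexivity.
Qed.

Lemma transpose_factors s :
  G_mor tree_tts X transpose_st transpose_clk transpose_is_mor (tree_unit s) = h s.
Proof.
  apply sig_eq; destruct (tree_run_spec T Ht s) as [Hrun Hend].
  transitivity (proj1_sig (h (run_end T (tree_run T Ht s)))).
  - exact (eq_sym (mor_run_lift _ Hrun)).
  - now rewrite Hend.
Qed.

Lemma transpose_unique f' g' (H' : is_tts_mor tree_tts X f' g') :
  (forall s, G_mor tree_tts X f' g' H' (tree_unit s) = h s) ->
  (forall s, f' s = transpose_st s) /\ (forall c, g' c = transpose_clk c).
Proof.
  intros Hfac.
  assert (Hconf : forall s, reached_conf s = (f' s, comp_val _ _ g' (tree_val s))).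
  { intros s; unfold reached_conf; rewrite <- Hfac; cbn [G_mor U_mor proj1_sig tree_unit].
    rewrite (run_end_map _ _ _ _ (Theta_mor_ok _ _ _ _ H')), lift_run_end.
    rewrite (proj2 (tree_run_spec T Ht s)); reflexivity. }
  split.
  - intros s; unfold transpose_st; rewrite Hconf; reflexivity.
  - intros c; apply tree_clk_eq; intros v; cbn [transpose_clk proj1_sig].
    rewrite Hconf; cbn [snd comp_val proj1_sig].
    destruct (classic (v = ts_init T)) as [-> | Hv].
    + split; intros Hc; exfalso; [exact (proj2_sig (g' c) Hc) | exact (proj1 Hc eq_refl)].
    + rewrite (tree_val_eq0 v (g' c) Hv); tauto.
Qed.

End Transpose.
End TreeTTS.

Theorem theorem3 (Sigma : Type) : is_coreflection_G Sigma.
Proof.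
  split; [intros X; apply U_is_tree|].
  intros T Ht; exists (tree_tts T Ht), (tree_unit T Ht).
  split; [apply tree_unit_is_mor|]; split; [apply tree_unit_is_iso|].
  intros X h Hh.
  exists (transpose_st T X h), (transpose_clk T X h), (transpose_is_mor T Ht X h Hh).
  split; [apply transpose_factors | apply transpose_unique].
Qed.
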